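(* Let $\Omega_1,\dots,\Omega_k$ be pairwise disjoint non-empty subsets of $\{1,\dots,n\}$, let $G_i\leq\mathrm{Sym}(\Omega_i)$, and let $G=G_1\cdot G_2\cdots G_k$ be their internal direct product, acting on $\Omega=\Omega_1\cup\cdots\cup\Omega_k$ by $x^{g_1\cdots g_k}=x^{g_i}$ for $x\in\Omega_i$. If every $G_i$ (with its action on $\Omega_i$) has the EKR property, then $G$ (with its action on $\Omega$) has the EKR property.
   Context: The internal direct product consists of the products $g_1g_2\cdots g_k$ with $g_i\in G_i$, with multiplication $(g_1\cdots g_k)(h_1\cdots h_k)=(g_1h_1)\cdots(g_kh_k)$. For a permutation group acting on a finite set: two elements $\pi,\tau$ intersect if $\pi\tau^{-1}$ has a fixed point. A subset is intersecting if every pair of its elements intersect. A group has the EKR property if every intersecting subset has size at most the size of the largest point-stabilizer. *)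

From mathcomp Require Import all_boot all_fingroup.
Set Implicit Arguments. Unset Strict Implicit. Unset Printing Implicit Defensive.
Local Open Scope group_scope.

Definition perm_intersect (T : finType) (Om : {set T}) (p q : {perm T}) : bool :=
  [exists x in Om, (p * q^-1) x == x].

Definition intersecting (T : finType) (Om : {set T}) (S : {set {perm T}}) : Prop :=
  forall p q, p \in S -> q \in S -> perm_intersect Om p q.

Definition max_stab (T : finType) (Om : {set T}) (G : {set {perm T}}) : nat :=
  \max_(x in Om) #|'C_G[x | 'P]|.

Definition EKR (T : finType) (Om : {set T}) (G : {set {perm T}}) : Prop :=
  forall S : {set {perm T}}, S \subset G -> intersecting Om S -> #|S| <= max_stab Om G.

(** Intersecting families are the independent sets of the derangement graph, and
    for groups with disjoint supports the derangement graph of [H * K] is the tensor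
    product of those of [H] and [K].  The EKR property of [H] yields, by averaging
    over the right cosets of a largest point stabiliser, the expansion inequality
    [|J| |H| <= m |N[J]|] for every independent set [J] with closed neighbourhood
    [N[J]].  Zhang's argument bounds the independent sets of a tensor product of two
    such graphs by [max (m1 |K|) (m2 |H|)], and this is at most the largest point
    stabiliser of [H * K]; induction on [k] concludes. *)

From mathcomp Require Import all_boot all_fingroup.
From mathcomp Require Import zify.
Set Implicit Arguments. Unset Strict Implicit. Unset Printing Implicit Defensive.

Definition independent (T : finType) (e : rel T) (J : {set T}) : Prop :=
  forall a b, a \in J -> b \in J -> ~~ e a b.

Definition closed_nbhd (T : finType) (V : {set T}) (e : rel T) (J : {set T}) : {set T} :=
  [set b in V | (b \in J) || [exists a in J, e a b]].

Lemma closed_nbhd_self (T : finType) (V : {set T}) (e : rel T) (J : {set T}) :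
  J \subset V -> J \subset closed_nbhd V e J.
Proof. by move=> sJV; apply/subsetP => a aJ; rewrite inE aJ (subsetP sJV). Qed.

Lemma closed_nbhd_adj (T : finType) (V : {set T}) (e : rel T) (J : {set T}) a b :
  a \in J -> b \in V -> e a b -> b \in closed_nbhd V e J.
Proof.
by move=> aJ bV eab; rewrite inE bV; apply/orP; right; apply/exists_inP; exists a.
Qed.

Definition expanding (T : finType) (V : {set T}) (e : rel T) (m : nat) : Prop :=
  forall J : {set T}, J \subset V -> independent e J ->
    #|J| * #|V| <= m * #|closed_nbhd V e J|.

Definition tensor_rel (A B : finType) (e1 : rel A) (e2 : rel B) : rel (A * B) :=
  [rel z z' | e1 z.1 z'.1 && e2 z.2 z'.2].

Lemma card_pairs (A B : finType) (Z : {set A * B}) :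
  #|Z| = \sum_(a : A) \sum_(b : B) ((a, b) \in Z).
Proof.
rewrite pair_big /= -sum1_card big_mkcond /=.
by apply: eq_bigr => -[a b] _.
Qed.

Lemma card_sum_mem (T : finType) (X : {set T}) : #|X| = \sum_(t : T) (t \in X).
Proof. by rewrite -sum1_card big_mkcond. Qed.

Section TensorIndependence.

Variables (A B : finType) (VA : {set A}) (VB : {set B}) (e1 : rel A) (e2 : rel B).
Hypotheses (e1C : symmetric e1) (e2C : symmetric e2).
Variable I : {set A * B}.
Hypotheses (sI : I \subset setX VA VB) (indI : independent (tensor_rel e1 e2) I).

(* A pair (a, b) of I goes to [iso b] when a has no e1-neighbour in its column, and
   to [rest a] otherwise; the closed neighbourhoods of all these independent sets are
   pairwise disjoint in VA x VB. *)
Let col b := [set a | (a, b) \in I].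
Let iso b := [set a in col b | [forall a' in col b, ~~ e1 a a']].
Let rest a := [set b | ((a, b) \in I) && (a \notin iso b)].

Lemma memI_VAB a b : (a, b) \in I -> (a \in VA) && (b \in VB).
Proof. by move=> abI; have := subsetP sI _ abI; rewrite in_setX. Qed.

Lemma iso_memI a b : a \in iso b -> (a, b) \in I.
Proof. by rewrite !inE => /andP[]. Qed.

Lemma rest_memI a b : b \in rest a -> (a, b) \in I.
Proof. by rewrite inE => /andP[]. Qed.

Lemma rest_nadj a b b' : b \in rest a -> (a, b') \in I -> ~~ e2 b b'.
Proof.
rewrite !inE => /andP[abI]; rewrite abI /= => /forall_inPn[a'].
rewrite inE negbK => a'bI ea ab'I.
by have := indI a'bI ab'I; rewrite /tensor_rel /= e1C ea.
Qed.

Lemma iso_independent b : independent e1 (iso b).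
Proof.
move=> a a'; rewrite inE => /andP[_ /forall_inP iso_a] /iso_memI a'bI.
by apply: iso_a; rewrite inE.
Qed.

Lemma rest_independent a : independent e2 (rest a).
Proof. by move=> b b' bR /rest_memI; apply: rest_nadj. Qed.

Lemma iso_sub b : iso b \subset VA.
Proof. by apply/subsetP => a /iso_memI /memI_VAB /andP[]. Qed.

Lemma rest_sub a : rest a \subset VB.
Proof. by apply/subsetP => b /rest_memI /memI_VAB /andP[]. Qed.

Lemma memI_split a b : ((a, b) \in I) = (a \in iso b) + (b \in rest a) :> nat.
Proof.
by rewrite [b \in _]inE; case: (boolP (a \in iso b)) => [/iso_memI ->|_]; rewrite ?andbT.
Qed.

Lemma nbhd_disjoint a b :
  (a \in closed_nbhd VA e1 (iso b)) + (b \in closed_nbhd VB e2 (rest a))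
    <= (a \in VA) && (b \in VB).
Proof.
have inA : a \in closed_nbhd VA e1 (iso b) -> (a \in VA) && (b \in VB).
  by rewrite inE => /andP[-> /orP[|/exists_inP[a0]]] /iso_memI /memI_VAB /andP[].
have inB : b \in closed_nbhd VB e2 (rest a) -> (a \in VA) && (b \in VB).
  by rewrite inE => /andP[bVB /orP[|/exists_inP[b0]]] /rest_memI /memI_VAB /andP[-> _].
have excl : a \in closed_nbhd VA e1 (iso b) -> b \in closed_nbhd VB e2 (rest a) -> False.
  move=> /setIdP[_ /orP[aiso | /exists_inP[a0 a0iso ea0]]].
    case/setIdP=> _ /orP[| /exists_inP[b0 b0R eb0]]; first by rewrite inE aiso andbF.
    by have := rest_nadj b0R (iso_memI aiso); rewrite eb0.
  case/setIdP=> _ /orP[bR | /exists_inP[b0 b0R eb0]].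
    move: a0iso; rewrite inE => /andP[_ /forall_inP/(_ a)].
    by rewrite inE (rest_memI bR) ea0 => /(_ isT).
  by have := indI (iso_memI a0iso) (rest_memI b0R); rewrite /tensor_rel /= ea0 e2C eb0.
case Ha: (a \in _); case Hb: (b \in _) => //=.
- by case: (excl Ha Hb).
- by rewrite (inA Ha).
- by rewrite (inB Hb).
Qed.

Lemma tensor_independent_bound (m1 m2 : nat) :
  expanding VA e1 m1 -> expanding VB e2 m2 -> #|I| <= maxn (m1 * #|VB|) (m2 * #|VA|).
Proof.
move=> exp1 exp2.
have [VAB0|VAB_gt0] := posnP (#|VA| * #|VB|).
  by rewrite (leq_trans (subset_leq_card sI)) // cardsX VAB0.
set s1 := \sum_b #|iso b|; set s2 := \sum_a #|rest a|.
set t1 := \sum_b #|closed_nbhd VA e1 (iso b)|.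
set t2 := \sum_a #|closed_nbhd VB e2 (rest a)|.
have cardI : #|I| = s1 + s2.
  rewrite card_pairs /s1 /s2 (eq_bigr _ (fun b _ => card_sum_mem (iso b))).
  rewrite (eq_bigr _ (fun a _ => card_sum_mem (rest a))) [X in _ = X + _]exchange_big.
  rewrite -big_split.
  by apply: eq_bigr => a _; rewrite -big_split; apply: eq_bigr => b _; apply: memI_split.
have cover : t1 + t2 <= #|VA| * #|VB|.
  rewrite -cardsX [X in _ <= X]card_pairs /t1 /t2.
  rewrite (eq_bigr _ (fun b _ => card_sum_mem (closed_nbhd VA e1 (iso b)))).
  rewrite (eq_bigr _ (fun a _ => card_sum_mem (closed_nbhd VB e2 (rest a)))).
  rewrite [X in X + _]exchange_big -big_split leq_sum // => a _.
  by rewrite -big_split leq_sum // => b _; rewrite in_setX nbhd_disjoint.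
have bound1 : s1 * #|VA| <= m1 * t1.
  rewrite big_distrl big_distrr /= leq_sum // => b _.
  by apply: exp1; [apply: iso_sub | apply: iso_independent].
have bound2 : s2 * #|VB| <= m2 * t2.
  rewrite big_distrl big_distrr /= leq_sum // => a _.
  by apply: exp2; [apply: rest_sub | apply: rest_independent].
rewrite cardI -(leq_pmul2r VAB_gt0).
have := leq_maxl (m1 * #|VB|) (m2 * #|VA|); have := leq_maxr (m1 * #|VB|) (m2 * #|VA|).
nia.
Qed.

End TensorIndependence.

Local Open Scope group_scope.

Definition nonintersecting (T : finType) (Om : {set T}) : rel {perm T} :=
  [rel p q | ~~ perm_intersect Om p q].

Lemma perm_intersectC (T : finType) (Om : {set T}) (p q : {perm T}) :
  perm_intersect Om p q = perm_intersect Om q p.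
Proof.
wlog suff : p q / perm_intersect Om p q -> perm_intersect Om q p.
  by move=> H; apply/idP/idP; apply: H.
case/exists_inP => x xOm /eqP fx; apply/exists_inP; exists x => //.
by rewrite -[q * p^-1]invgK invMg invgK -{1}fx permK.
Qed.

Lemma nonintersectingC (T : finType) (Om : {set T}) : symmetric (nonintersecting Om).
Proof. by move=> p q; rewrite /nonintersecting /= perm_intersectC. Qed.

Lemma card_rcosetI_sum (gT : finGroupType) (G H : {group gT}) (C : {set gT}) :
  H \subset G -> C \subset G -> \sum_(g in G) #|H :* g :&: C| = (#|C| * #|H|)%N.
Proof.
move=> sHG sCG.
rewrite (eq_bigr (fun g => \sum_(c in C) (c \in H :* g))); last first.
  move=> g _; rewrite card_sum_mem [RHS]big_mkcond /=.
  by apply: eq_bigr => c _; rewrite inE andbC; case: (c \in C).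
rewrite exchange_big -sum_nat_const; apply: eq_bigr => c cC.
rewrite -(card_rcoset H c) card_sum_mem big_mkcond /=; apply: eq_bigr => g _.
rewrite !mem_rcoset -[c * g^-1]invgK groupV invMg invgK.
have [gcH|] := boolP (g * c^-1 \in H); last by case: (g \in G).
have gG : g \in G.
  by rewrite -(mulgKV c g) groupM ?(subsetP sHG _ gcH) ?(subsetP sCG c cC).
by rewrite gG.
Qed.

Lemma stab_rcoset_intersect (T : finType) (Om : {set T}) (H : {group {perm T}}) x g p q :
  x \in Om -> p \in 'C_H[x | 'P] :* g -> q \in 'C_H[x | 'P] :* g -> perm_intersect Om p q.
Proof.
move=> xOm; rewrite !mem_rcoset => pSt qSt; apply/exists_inP; exists x => //.
have : (p * g^-1) * (q * g^-1)^-1 \in 'C_H[x | 'P] by rewrite groupM ?groupV.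
by rewrite invMg invgK mulgA mulgKV => /setIP[_ /astab1P /eqP].
Qed.

Lemma EKR_rcoset_bound (T : finType) (Om : {set T}) (H : {group {perm T}})
    (J : {set {perm T}}) x g :
  EKR Om H -> J \subset H -> intersecting Om J -> x \in Om ->
  #|'C_H[x | 'P] :* g :&: (H :\: closed_nbhd H (nonintersecting Om) J)| + #|J|
    <= max_stab Om H.
Proof.
move=> ekr sJH intJ xOm; set X := _ :&: _.
have cross p q : p \in X -> q \in J -> perm_intersect Om q p.
  move=> /setIP[_ /setDP[pH pN]] qJ; apply: contraNT pN => npi.
  exact: closed_nbhd_adj qJ pH npi.
have disXJ : [disjoint X & J].
  rewrite disjoint_subset; apply/subsetP => p /setIP[_ /setDP[_ pN]].
  by apply: contra pN; apply: subsetP (closed_nbhd_self _ sJH) p.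
have <- : #|X :|: J| = #|X| + #|J| by apply/eqP; rewrite (leq_card_setU X J).2.
apply: ekr.
  by rewrite subUset sJH andbT; apply/subsetP => p /setIP[_ /setDP[]].
move=> p q /setUP[pX|pJ] /setUP[qX|qJ].
- case/setIP: pX => pSt _; case/setIP: qX => qSt _.
  exact: stab_rcoset_intersect pSt qSt.
- by rewrite perm_intersectC; apply: cross.
- exact: cross.
- exact: intJ.
Qed.

Lemma EKR_expanding (T : finType) (Om : {set T}) (H : {group {perm T}}) :
  EKR Om H -> expanding H (nonintersecting Om) (max_stab Om H).
Proof.
move=> ekr J sJH indJ.
have intJ : intersecting Om J by move=> p q pJ qJ; have := indJ p q pJ qJ; rewrite negbK.
have [->|[p pJ]] := set_0Vmem J; first by rewrite cards0.
have Om_gt0 : 0 < #|Om|.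
  by case/exists_inP: (intJ p p pJ pJ) => x xOm _; apply/card_gt0P; exists x.
have [x xOm maxE] := eq_bigmax_cond (fun x => #|'C_H[x | 'P]|) Om_gt0.
set N := closed_nbhd H (nonintersecting Om) J; set St := 'C_H[x | 'P]%G.
have : \sum_(g in H) (#|St :* g :&: (H :\: N)| + #|J|) <= \sum_(g in H) max_stab Om H.
  by apply: leq_sum => g _; apply: EKR_rcoset_bound.
rewrite big_split /= card_rcosetI_sum ?subsetIl ?subsetDl // !sum_nat_const /=.
have sNH : N \subset H by apply/subsetP => q /setIdP[].
rewrite /max_stab maxE cardsD (setIidPr sNH); have := subset_leq_card sNH.
(* [set] identifies cardinals that differ only in their coercion paths. *)
set s := #|'C_H[x | 'P]|; set h := #|H|; set n := #|N|; set j := #|J|.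
nia.
Qed.

Lemma EKR_set0 (T : finType) (G : {set {perm T}}) : EKR set0 G.
Proof.
move=> S _ intS; suff -> : S = set0 by rewrite cards0.
apply/setP => p; rewrite inE; apply/negbTE/negP => pS.
by case/exists_inP: (intS p p pS pS) => x; rewrite inE.
Qed.

Lemma perm_on_Sym (T : finType) (O : {set T}) (G : {set {perm T}}) g :
  G \subset Sym O -> g \in G -> perm_on O g.
Proof. by move=> sG /(subsetP sG); rewrite inE. Qed.

Lemma commute_Sym (T : finType) (O1 O2 : {set T}) (H K : {set {perm T}}) :
  [disjoint O1 & O2] -> H \subset Sym O1 -> K \subset Sym O2 -> commute H K.
Proof.
move=> dis sH sK; apply: centC; apply/centsP => h hH k kK.
exact: perm_onC (perm_on_Sym sH hH) (perm_on_Sym sK kK) dis.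
Qed.

Lemma mul_Sym (T : finType) (O1 O2 : {set T}) (H K : {set {perm T}}) :
  H \subset Sym O1 -> K \subset Sym O2 -> H * K \subset Sym (O1 :|: O2).
Proof.
move=> sH sK; apply/subsetP => _ /mulsgP[h k hH kK ->]; rewrite inE.
apply: perm_onM.
  exact: subset_trans (perm_on_Sym sH hH) (subsetUl _ _).
exact: subset_trans (perm_on_Sym sK kK) (subsetUr _ _).
Qed.

Lemma card_preimage_mulg (gT : finGroupType) (H K : {group gT}) (S : {set gT}) :
  H :&: K = 1 -> S \subset H * K ->
  #|[set z in setX H K | z.1 * z.2 \in S]| = #|S|.
Proof.
move=> tiHK sS; set I := [set z in _ | _].
have -> : S = [set z.1 * z.2 | z in I].
  apply/setP => s; apply/idP/imsetP => [sS'|[z /setIdP[_ zS] ->] //].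
  have /mulsgP[h k hH kK e] := subsetP sS s sS'.
  by exists (h, k); rewrite // inE in_setX hH kK -e.
apply/esym/card_in_imset => -[h k] [h' k'].
move=> /setIdP[/setXP[hH kK] _] /setIdP[/setXP[h'H k'K] _] /= e.
have e' : h'^-1 * h = k' * k^-1 by apply: (canRL (mulgK k)); rewrite -mulgA e mulKg.
have : h'^-1 * h \in H :&: K by rewrite inE groupM ?groupV //= e' groupM ?groupV.
rewrite tiHK => /set1P /(canRL (mulKg h'^-1)); rewrite invgK mulg1 => eh.
by move: e; rewrite eh => /mulgI ->.
Qed.

Lemma permM_disjoint (T : finType) (O1 O2 : {set T}) (u v : {perm T}) x :
  [disjoint O1 & O2] -> perm_on O1 u -> perm_on O2 v ->
  (u * v) x = if x \in O1 then u x else v x.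
Proof.
move=> dis pu pv; rewrite permM; case: ifP => xO1; last by rewrite (out_perm pu) ?xO1.
by apply: out_perm pv _; rewrite (disjointFr dis) // (perm_closed _ pu).
Qed.

Section DisjointProduct.

Variables (T : finType) (O1 O2 : {set T}) (H K : {group {perm T}}).
Hypotheses (dis : [disjoint O1 & O2]) (sH : H \subset Sym O1) (sK : K \subset Sym O2).

Lemma TI_Sym_disjoint : H :&: K = 1.
Proof.
apply/trivgP/subsetP => u /setIP[uH uK]; apply/set1P/permP => x; rewrite perm1.
case: (boolP (x \in O1)) => xO1; last exact: out_perm (perm_on_Sym sH uH) xO1.
by apply: out_perm (perm_on_Sym sK uK) _; rewrite (disjointFr dis xO1).
Qed.

Lemma perm_intersect_mul h h' k k' :
  h \in H -> h' \in H -> k \in K -> k' \in K ->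
  perm_intersect (O1 :|: O2) (h * k) (h' * k') =
    perm_intersect O1 h h' || perm_intersect O2 k k'.
Proof.
move=> hH h'H kK k'K.
have pu : perm_on O1 (h * h'^-1) by rewrite (perm_on_Sym sH) ?groupM ?groupV.
have pv : perm_on O2 (k * k'^-1) by rewrite (perm_on_Sym sK) ?groupM ?groupV.
rewrite /perm_intersect.
have -> : (h * k) * (h' * k')^-1 = (h * h'^-1) * (k * k'^-1).
  rewrite invMg -!mulgA; congr (h * _); rewrite mulgA.
  by apply: perm_onC pv (perm_on_Sym sH (groupVr h'H)) _; rewrite disjoint_sym.
apply/exists_inP/orP => [[x]|[] /exists_inP[x xO fx]].
- rewrite in_setU (permM_disjoint _ dis pu pv).
  by case: ifP => xO1 /= xO fx; [left | right]; apply/exists_inP; exists x.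
- by exists x; [rewrite in_setU xO | rewrite (permM_disjoint _ dis pu pv) xO].
- exists x; first by rewrite in_setU xO orbT.
  by rewrite (permM_disjoint _ dis pu pv) (disjointFl dis xO).
Qed.

Lemma max_stab_mulr : (max_stab O1 H * #|K| <= max_stab (O1 :|: O2) (H * K)%g)%N.
Proof.
rewrite /max_stab; have [/cards0_eq -> | O1_gt0] := posnP #|O1|.
  by rewrite big_set0.
have [x xO1 ->] := eq_bigmax_cond (fun x => #|'C_H[x | 'P]|) O1_gt0.
have tiCK : 'C_H[x | 'P] :&: K = 1.
  by apply/trivgP; rewrite -TI_Sym_disjoint setSI ?subsetIl.
have xO : x \in O1 :|: O2 by rewrite in_setU xO1.
rewrite -(TI_cardMg tiCK); apply: leq_trans (leq_bigmax_cond _ xO).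
apply: subset_leq_card; apply/subsetP => _ /mulsgP[u k /setIP[uH /astab1P ux] kK ->].
rewrite inE mem_mulg //=; apply/astab1P; move: ux; rewrite /= !apermE permM => ->.
by apply: out_perm (perm_on_Sym sK kK) _; rewrite (disjointFr dis xO1).
Qed.

End DisjointProduct.

Lemma EKR_mul (T : finType) (O1 O2 : {set T}) (H K : {group {perm T}}) :
  [disjoint O1 & O2] -> H \subset Sym O1 -> K \subset Sym O2 ->
  EKR O1 H -> EKR O2 K -> EKR (O1 :|: O2) (H * K).
Proof.
move=> dis sH sK ekrH ekrK S sS intS.
set I := [set z in setX H K | z.1 * z.2 \in S].
have indI : independent (tensor_rel (nonintersecting O1) (nonintersecting O2)) I.
  move=> [h k] [h' k'] /setIdP[/setXP[hH kK] hkS] /setIdP[/setXP[h'H k'K] hk'S].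
  by rewrite /tensor_rel /= -negb_or -(perm_intersect_mul dis sH sK) ?intS.
have sI : I \subset setX H K by apply/subsetP => z /setIdP[].
rewrite -(card_preimage_mulg (TI_Sym_disjoint dis sH sK) sS).
apply: leq_trans (tensor_independent_bound (nonintersectingC O1) (nonintersectingC O2)
  sI indI (EKR_expanding ekrH) (EKR_expanding ekrK)) _.
rewrite geq_max max_stab_mulr //= (commute_Sym dis sH sK) setUC max_stab_mulr //.
by rewrite disjoint_sym.
Qed.

Section WidenIndex.

Variables (T : finType) (k : nat) (Om : 'I_k.+1 -> {set T}).
Hypothesis dis : forall i j, i != j -> [disjoint Om i & Om j].

Lemma disjoint_widen (i j : 'I_k) :
  i != j -> [disjoint Om (widen_ord (leqnSn k) i) & Om (widen_ord (leqnSn k) j)].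
Proof. by move=> ij; apply: dis; apply: contra ij => /eqP [] /val_inj ->. Qed.

Lemma disjoint_bigcup_last :
  [disjoint \bigcup_(i < k) Om (widen_ord (leqnSn k) i) & Om ord_max].
Proof.
rewrite disjoint_sym; apply: bigcup_disjoint => i _; rewrite disjoint_sym; apply: dis.
by rewrite -val_eqE /= neq_ltn ltn_ord.
Qed.

End WidenIndex.

Lemma bigprod_Sym (T : finType) (k : nat) (Om : 'I_k -> {set T})
    (G : 'I_k -> {group {perm T}}) :
  (forall i j, i != j -> [disjoint Om i & Om j]) -> (forall i, G i \subset Sym (Om i)) ->
  group_set (\prod_(i < k) (G i : {set {perm T}})) &&
  (\prod_(i < k) (G i : {set {perm T}}) \subset Sym (\bigcup_(i < k) Om i)).
Proof.
elim: k Om G => [|k IHk] Om G dis sG; first by rewrite !big_ord0 group_set_one sub1G.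
rewrite !big_ord_recr /=.
have /andP[gP sP] := IHk _ _ (disjoint_widen dis) (fun i => sG _).
have disP := disjoint_bigcup_last dis.
apply/andP; split; last exact: mul_Sym sP (sG _).
exact/(@comm_group_setP _ (Group gP))/(commute_Sym disP sP (sG _)).
Qed.

Theorem theorem18 (n k : nat) (Om : 'I_k -> {set 'I_n})
    (G : 'I_k -> {group {perm 'I_n}}) :
  (forall i, Om i != set0) ->
  (forall i j, i != j -> [disjoint Om i & Om j]) ->
  (forall i, G i \subset Sym (Om i)) ->
  (forall i, EKR (Om i) (G i)) ->
  EKR (\bigcup_(i < k) Om i) (\prod_(i < k) (G i : {set {perm 'I_n}})).
Proof.
move=> _ dis sG ekr; elim: k Om G dis sG ekr => [|k IHk] Om G dis sG ekr.
  by rewrite big_ord0; apply: EKR_set0.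
rewrite !big_ord_recr /=.
have /andP[gP sP] := bigprod_Sym (disjoint_widen dis) (fun i => sG _).
apply: (EKR_mul (H := Group gP) (disjoint_bigcup_last dis) sP (sG _) _ (ekr _)).
exact: IHk (disjoint_widen dis) (fun i => sG _) (fun i => ekr _).
Qed.
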